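(* Let $M\ge\frac52$, $\mu=\frac{2}{2M+3}$, and consider Algorithm A run on an input whose optimal offline makespan is $1$. Then for every $j\ge1$, the load of $m_1$ just after job $j$ has been handled is at most $1+\mu$.
   Context: Model (two hierarchical machines with migration, bin stretching). Jobs $1,2,\dots,n$ arrive one by one ($n$ unknown in advance). Job $j$ has a size $p_j>0$ and a grade of service (GoS) $g_j\in\{1,2\}$; a job of GoS $1$ may only be processed on machine $m_1$, a job of GoS $2$ may be processed on $m_1$ or on $m_2$. The load of a machine is the total size of the jobs assigned to it, and the makespan is the maximum load. When job $j$ arrives, the algorithm must assign it to a machine, and at the same time it may reassign (migrate) previously arrived jobs to other machines (respecting the GoS constraints), provided that the total size of the migrated jobs is at most $M\cdot p_j$; $M\ge 0$ is the migration factor. Bin stretching: the optimal offline makespan of the complete input is known in advance and scaled to $1$. Notation: $Y_{j}$ is the set of jobs on $m_2$ just after job $j$ has been handled (including migrations), $y_j$ its total size, $y_0=0$. $Z$ denotes the set of GoS-2 jobs currently on $m_1$. Algorithm A (with $\mu=\frac{2}{2M+3}$). On arrival of job $j$: (i) if $g_j=1$ or $y_{j-1}\ge 1-\mu$, assign $j$ to $m_1$; (ii) else if $y_{j-1}+p_j\le 1+\mu$, assign $j$ to $m_2$; (iii) otherwise, among all GoS-2 jobs arrived so far (the current $Z$, the current $Y_{j-1}$, and $j$), choose a subset $W$ of maximum total size subject to total size at most $1$; rearrange so that exactly the jobs of $W$ are on $m_2$ and all other arrived jobs are on $m_1$. *)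

From HB Require Import structures.
From mathcomp Require Import all_boot all_order all_algebra.
Set Implicit Arguments. Unset Strict Implicit. Unset Printing Implicit Defensive.
Import Order.TTheory GRing.Theory Num.Theory.
Local Open Scope ring_scope.

(* Jobs are indexed by 'I_n (0-indexed: job i of Rocq = job i+1 of the paper).
   p i : size, g i : grade of service (1 or 2).
   A set of jobs A : {set 'I_n} describes the jobs placed on machine m_2;
   all other (arrived) jobs are on m_1. *)

Section Defs.
Variables (R : realFieldType) (n : nat).

Definition setsum (p : 'I_n -> R) (A : {set 'I_n}) : R := \sum_(i in A) p i.

Definition feasible (g : 'I_n -> nat) (A : {set 'I_n}) : Prop :=
  A \subset [set i | g i == 2%N].

Definition makespan (p : 'I_n -> R) (A : {set 'I_n}) : R :=
  Num.max (setsum p (~: A)) (setsum p A).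

Definition opt_makespan_is (p : 'I_n -> R) (g : 'I_n -> nat) (v : R) : Prop :=
  (exists A, feasible g A /\ makespan p A <= v) /\
  (forall A, feasible g A -> v <= makespan p A).

(* One step of Algorithm A handling job j: Yprev = Y_{j-1}, Ynext = Y_j. *)
Definition algA_step (mu : R) (p : 'I_n -> R) (g : 'I_n -> nat) (j : 'I_n)
    (Yprev Ynext : {set 'I_n}) : Prop :=
  let y := setsum p Yprev in
  if (g j == 1%N) || (1 - mu <= y) then Ynext = Yprev
  else if y + p j <= 1 + mu then Ynext = j |: Yprev
  else
    let C := [set i : 'I_n | (i <= j)%N && (g i == 2%N)] in
    [/\ Ynext \subset C, setsum p Ynext <= 1 &
        forall W : {set 'I_n}, W \subset C -> setsum p W <= 1 -> setsum p W <= setsum p Ynext].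

(* A run of Algorithm A (any tie-breaking in step (iii)):
   Y k = set of jobs on m_2 after the first k jobs have been handled. *)
Definition algA_run (mu : R) (p : 'I_n -> R) (g : 'I_n -> nat)
    (Y : nat -> {set 'I_n}) : Prop :=
  Y 0%N = set0 /\ forall j : 'I_n, algA_step mu p g j (Y j) (Y j.+1).

Definition load1_after (p : 'I_n -> R) (Y : nat -> {set 'I_n}) (j : 'I_n) : R :=
  \sum_(i : 'I_n | (i <= j)%N && (i \notin Y j.+1)) p i.

End Defs.

From HB Require Import structures.
From mathcomp Require Import all_boot all_order all_algebra.
From mathcomp Require Import lra.
Set Implicit Arguments. Unset Strict Implicit.
Import Order.TTheory GRing.Theory Num.Theory.
Local Open Scope ring_scope.

(* Fix an optimal schedule [A].  Algorithm A keeps the invariant that either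
   [m_2] is already loaded to at least [1 - mu], or the GoS-1 jobs together
   with the GoS-2 jobs waiting on [m_1] weigh at most [1].  Steps (i) and (ii)
   never add a waiting GoS-2 job unless [m_2] carries [1 - mu] already.  After
   a repacking (iii), [m_2] carries at least as much as the arrived GoS-2 jobs
   of [A] (they fit under [1]), so the waiting ones weigh at most the arrived
   GoS-2 jobs outside [A]; in the optimum these share [m_1] with all GoS-1
   jobs.  The invariant bounds the load of [m_1] by [2 - (1 - mu)] in the
   first case (the total size is at most [2]) and by [1] in the second, so
   the bound holds for every [mu >= 0]. *)

Section SetSum.
Variables (R : realFieldType) (n : nat) (p : 'I_n -> R).

Lemma setsumID (D B : {set 'I_n}) :
  setsum p D = setsum p (D :&: B) + setsum p (D :\: B).
Proof. exact: big_setID. Qed.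

Lemma setsumC (B : {set 'I_n}) : setsum p (~: B) = setsum p setT - setsum p B.
Proof.
by rewrite (setsumID setT B) setTI setTD [setsum p B + _]addrC addrK.
Qed.

Hypothesis p_ge0 : forall i, 0 <= p i.

Lemma setsum_ge0 (D : {set 'I_n}) : 0 <= setsum p D.
Proof. exact: sumr_ge0. Qed.

Lemma setsumS (A B : {set 'I_n}) : A \subset B -> setsum p A <= setsum p B.
Proof.
by move=> sAB; rewrite (setsumID B A) (setIidPr sAB) lerDl setsum_ge0.
Qed.

Lemma setsumU_le (A B : {set 'I_n}) :
  setsum p (A :|: B) <= setsum p A + setsum p B.
Proof.
rewrite (setsumID (A :|: B) A) (setIidPr (subsetUl A B)) lerD2l.
by apply: setsumS; rewrite setDUl setDv set0U subsetDl.
Qed.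

End SetSum.

Section AlgorithmA.
Variables (R : realFieldType) (n : nat) (p : 'I_n -> R) (g : 'I_n -> nat).
Variable mu : R.

Hypothesis p_ge0 : forall i, 0 <= p i.
Hypothesis g12 : forall i, g i = 1%N \/ g i = 2%N.

Definition arrived (k : nat) : {set 'I_n} := [set i : 'I_n | (i < k)%N].
Definition gos1 : {set 'I_n} := [set i | g i == 1%N].
Definition gos2 : {set 'I_n} := [set i | g i == 2%N].

Definition waiting2 (k : nat) (B : {set 'I_n}) := (arrived k :&: gos2) :\: B.

Definition algA_inv (k : nat) (B : {set 'I_n}) : Prop :=
  1 - mu <= setsum p B \/ setsum p gos1 + setsum p (waiting2 k B) <= 1.

Lemma waiting2_step (j : 'I_n) (B B' : {set 'I_n}) :
  B \subset B' -> (g j = 2%N -> j \in B') ->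
  waiting2 j.+1 B' \subset waiting2 j B.
Proof.
move=> sBB' jB'; apply/subsetP=> i; rewrite !inE ltnS leq_eqVlt.
case/and3P=> iB' /orP[/eqP/val_inj ij | ->] /eqP gi.
  by move: iB'; rewrite ij jB' // -ij.
by rewrite gi eqxx !andbT; exact: contra (subsetP sBB' i) iB'.
Qed.

Lemma algA_inv_grow (j : 'I_n) (B B' : {set 'I_n}) :
  B \subset B' -> (g j = 2%N -> j \in B') ->
  algA_inv j B -> algA_inv j.+1 B'.
Proof.
move=> sBB' jB' [yB | wB]; [left | right].
  exact: le_trans yB (setsumS p_ge0 sBB').
apply: le_trans wB; rewrite lerD2l.
exact/(setsumS p_ge0)/waiting2_step.
Qed.

Variable A : {set 'I_n}.
Hypothesis A_feasible : feasible g A.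
Hypothesis A_load1 : setsum p (~: A) <= 1.
Hypothesis A_load2 : setsum p A <= 1.

Lemma gos1_subset_complA : gos1 \subset ~: A.
Proof.
apply/subsetP=> i; rewrite !inE => /eqP gi; apply/negP => iA.
by move/subsetP: A_feasible => /(_ i iA); rewrite inE gi.
Qed.

Lemma algA_inv_repack (j : 'I_n) (B : {set 'I_n}) :
  let C := arrived j.+1 :&: gos2 in
  B \subset C ->
  (forall W : {set 'I_n},
     W \subset C -> setsum p W <= 1 -> setsum p W <= setsum p B) ->
  algA_inv j.+1 B.
Proof.
move=> C sBC B_max; right.
have CA_le : setsum p (C :&: A) <= setsum p B.
  apply: B_max; first exact: subsetIl.
  exact: le_trans (setsumS p_ge0 (subsetIr _ _)) A_load2.
have sum_outside_A : setsum p gos1 + setsum p (C :\: A) <= 1.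
  apply: le_trans A_load1.
  rewrite (setsumID p (~: A) gos1) (setIidPr gos1_subset_complA) lerD2l.
  apply: setsumS => //; apply/subsetP=> i; rewrite !inE.
  by case/and3P=> -> _ /eqP ->.
have waitE : setsum p (waiting2 j.+1 B) = setsum p C - setsum p B.
  rewrite /waiting2 -/C (setsumID p C B) (setIidPr sBC).
  by rewrite [setsum p B + _]addrC addrK.
rewrite waitE (setsumID p C A); lra.
Qed.

Lemma algA_step_inv (j : 'I_n) (B B' : {set 'I_n}) :
  algA_inv j B -> algA_step mu p g j B B' -> algA_inv j.+1 B'.
Proof.
move=> invB; rewrite /algA_step /=; case: ifP => [/orP step_i -> | _].
  case: step_i => [/eqP gj | yB]; last by left.
  by apply: algA_inv_grow invB => //; rewrite gj.
case: ifP => [_ -> | _].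
  by apply: algA_inv_grow invB; [exact: subsetUr | rewrite setU11].
have -> : [set i : 'I_n | (i <= j)%N && (g i == 2%N)] = arrived j.+1 :&: gos2.
  by apply/setP=> i; rewrite !inE ltnS.
by case=> sBC _ B_max; exact: algA_inv_repack.
Qed.

Lemma algA_run_inv (Y : nat -> {set 'I_n}) :
  algA_run mu p g Y -> forall k, (k <= n)%N -> algA_inv k (Y k).
Proof.
case=> Y0 Ystep; elim=> [_ | k IHk kn].
  right; rewrite Y0 /waiting2.
  have -> : arrived 0 :&: gos2 = set0 by apply/setP=> i; rewrite !inE.
  rewrite set0D [setsum p set0]big_set0 addr0.
  exact: le_trans (setsumS p_ge0 gos1_subset_complA) A_load1.
exact: (algA_step_inv (j := Ordinal kn)) (IHk (ltnW kn)) (Ystep _).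
Qed.

Lemma load1_afterE (Y : nat -> {set 'I_n}) (j : 'I_n) :
  load1_after p Y j = setsum p (arrived j.+1 :\: Y j.+1).
Proof. by apply: eq_bigl => i; rewrite !inE ltnS andbC. Qed.

Lemma algA_load1_le (Y : nat -> {set 'I_n}) (j : 'I_n) :
  0 <= mu -> algA_run mu p g Y -> load1_after p Y j <= 1 + mu.
Proof.
move=> mu_ge0 runY; rewrite load1_afterE.
have [y_big | w_small] := algA_run_inv runY (ltn_ord j).
  have total_le2 : setsum p setT <= 2.
    by move: A_load1 A_load2; rewrite setsumC; lra.
  apply: le_trans (setsumS p_ge0 (_ : _ \subset ~: Y j.+1)) _.
    by rewrite setDE subsetIr.
  by rewrite setsumC; lra.
have cover : arrived j.+1 :\: Y j.+1 \subset gos1 :|: waiting2 j.+1 (Y j.+1).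
  apply/subsetP=> i; rewrite !inE => /andP[iY ij].
  by case: (g12 i) => ->; rewrite ?iY ?ij.
apply: le_trans (setsumS p_ge0 cover) _.
by apply: le_trans (setsumU_le p_ge0 _ _) _; lra.
Qed.

End AlgorithmA.

Theorem mainTheorem3 (R : realFieldType) (M : R) (n : nat)
    (p : 'I_n -> R) (g : 'I_n -> nat) (Y : nat -> {set 'I_n}) :
  5 / 2 <= M ->
  (forall i, 0 < p i) ->
  (forall i, g i = 1%N \/ g i = 2%N) ->
  opt_makespan_is p g 1 ->
  algA_run (2 / (2 * M + 3)) p g Y ->
  forall j : 'I_n, load1_after p Y j <= 1 + 2 / (2 * M + 3).
Proof.
move=> M_ge p_gt0 g12 [[A [A_feasible]]] + _ runY j.
rewrite /makespan ge_max => /andP[A_load1 A_load2].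
have p_ge0 i : 0 <= p i := ltW (p_gt0 i).
apply: (algA_load1_le p_ge0 g12 A_feasible A_load1 A_load2 j _ runY).
by rewrite divr_ge0 //; lra.
Qed.
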